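(* Let $m,n,p,q\in\mathbb{R}$ with $m<0$. Set $u=\frac{2\sqrt{-m}}{\sqrt5}$, $\alpha=\frac{16n}{u^3}$, $\beta=\frac{16p}{u^4}-5$, $\gamma=\frac{16q}{u^5}$, and $f(\theta)=\alpha\cos^2\theta+\beta\cos\theta+\cos 5\theta+\gamma$. Then $f$ has at most four critical points in the open interval $(0,\pi)$, and consequently $f$ has at most five zeros in $[0,\pi]$. *)

From Stdlib Require Import Reals Lra List.
Open Scope R_scope.

Definition u_of (m : R) : R := 2 * sqrt (- m) / sqrt 5.
Definition alpha_of (m n : R) : R := 16 * n / (u_of m ^ 3).
Definition beta_of (m p : R) : R := 16 * p / (u_of m ^ 4) - 5.
Definition gamma_of (m q : R) : R := 16 * q / (u_of m ^ 5).

Definition f_of (m n p q : R) (theta : R) : R :=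
  alpha_of m n * (cos theta) ^ 2 + beta_of m p * cos theta
  + cos (5 * theta) + gamma_of m q.

(* "S has at most k elements": every duplicate-free list of elements of S
   has length at most k. *)
Definition at_most (k : nat) (S : R -> Prop) : Prop :=
  forall l : list R, NoDup l -> (forall x, In x l -> S x) -> (length l <= k)%nat.

(** Since cos 5θ = 16 cos⁵θ - 20 cos³θ + 5 cos θ, we have f(θ) = P(cos θ) for a
    real polynomial P of degree 5 with leading coefficient 16, hence
    f'(θ) = -sin θ · P'(cos θ) with P' of degree 4.  As sin θ ≠ 0 on (0, π), every
    critical point of f there is sent by cos to a root of P', and every zero of f
    in [0, π] to a root of P; cos is injective on [0, π], so the bounds follow
    from the number of roots of a nonzero polynomial. *)

From Stdlib Require Import Reals List Lra FunctionalExtensionality.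
From mathcomp Require Import ssreflect ssrfun ssrbool eqtype ssrnat seq.
From mathcomp Require Import ssralg poly ssrnum Rstruct.
Import GRing.Theory Num.Theory.
Open Scope R_scope.

Lemma InP (T : eqType) (x : T) (s : seq T) : reflect (List.In x s) (x \in s).
Proof.
elim: s => [|y s IH] /=; first by constructor.
rewrite in_cons; apply: (iffP orP) => [[/eqP->|/IH]|[->|/IH]]; rewrite ?eqxx; auto.
Qed.

Lemma NoDup_uniq (T : eqType) (s : seq T) : NoDup s -> uniq s.
Proof. by elim=> //= x {}s xs _ ->; rewrite andbT; apply/negP => /InP. Qed.

Lemma at_most_le k k' S : (k <= k')%N -> at_most k S -> at_most k' S.
Proof. by move=> /leP kk' atS l ul lS; apply: Nat.le_trans kk'; apply: atS. Qed.

Lemma at_most_inj_on k (S T : R -> Prop) (g : R -> R) :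
  (forall x y, S x -> S y -> g x = g y -> x = y) -> (forall x, S x -> T (g x)) ->
  at_most k T -> at_most k S.
Proof.
move=> g_inj gST atT l ul lS; rewrite -(length_map g); apply: atT.
- apply: NoDup_map_NoDup_ForallPairs ul => x y xl yl; exact: g_inj (lS x xl) (lS y yl).
- by move=> _ /in_map_iff [x [<- xl]]; apply/gST/lS.
Qed.

Lemma at_most_cos k (S T : R -> Prop) :
  (forall x, S x -> 0 <= x <= PI /\ T (cos x)) -> at_most k T -> at_most k S.
Proof.
move=> ST; apply: (@at_most_inj_on k S T cos) => [x y /ST[xI _] /ST[yI _]|x /ST[]//].
exact: cos_inj.
Qed.

Lemma cos_5a t : cos (5 * t) = 16 * cos t ^ 5 - 20 * cos t ^ 3 + 5 * cos t.
Proof.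
have cos_rec a b c : a = b + t -> c = b - t -> cos a = 2 * cos t * cos b - cos c.
  by move=> -> ->; rewrite cos_plus cos_minus; ring.
have c3 : cos (3 * t) = 2 * cos t * cos (2 * t) - cos t by apply: cos_rec; ring.
have c4 : cos (4 * t) = 2 * cos t * cos (3 * t) - cos (2 * t) by apply: cos_rec; ring.
have c5 : cos (5 * t) = 2 * cos t * cos (4 * t) - cos (3 * t) by apply: cos_rec; ring.
by rewrite c5 c4 c3 cos_2a_cos; ring.
Qed.

Section PolynomialsInCos.
Local Open Scope ring_scope.

Lemma at_most_roots (p : {poly R}) : p != 0 -> at_most (size p).-1 (root p).
Proof.
move=> p0 l /NoDup_uniq ul rl; apply/leP.
have -> : length l = size l by elim: l {ul rl} => //= x l ->.
rewrite -ltnS prednK ?size_poly_gt0 //; apply: max_poly_roots => //.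
by apply/allP => x /InP /rl.
Qed.

Lemma derivable_pt_lim_horner (p : {poly R}) x :
  derivable_pt_lim (fun y => p.[y]) x (p^`()).[x].
Proof.
elim/poly_ind: p => [|p c IH].
  rewrite deriv0 horner0; apply: (derivable_pt_lim_ext (fct_cte 0)).
    by move=> y; rewrite horner0.
  exact: derivable_pt_lim_const.
apply: (derivable_pt_lim_ext (fun y => p.[y] * y + c)).
  by move=> y; rewrite hornerMXaddC.
have := derivable_pt_lim_plus _ _ x _ _
  (derivable_pt_lim_mult _ _ x _ _ IH (derivable_pt_lim_id x)) (derivable_pt_lim_const c x).
by rewrite derivMXaddC hornerD hornerM hornerX /id RplusE !RmultE mulr1 addr0 addrC.
Qed.

End PolynomialsInCos.

Lemma derivable_pt_lim_horner_cos (p : {poly R}) t :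
  derivable_pt_lim (fun t => p.[cos t]%R) t ((p^`()).[cos t]%R * - sin t).
Proof. exact: derivable_pt_lim_comp (derivable_pt_lim_cos t) (derivable_pt_lim_horner p _). Qed.

Lemma root_deriv_critical_horner_cos (p : {poly R}) t : 0 < t < PI ->
  derivable_pt_lim (fun t => p.[cos t]%R) t 0 -> root (p^`())%R (cos t).
Proof.
move=> [t0 tPI] crit; apply/eqP.
have := uniqueness_limite _ _ _ _ crit (derivable_pt_lim_horner_cos p t).
move=> /esym /Rmult_integral [//|]; have := sin_gt_0 t t0 tPI; lra.
Qed.

Lemma at_most_critical_horner_cos (p : {poly R}) : (p^`() != 0)%R ->
  at_most (size p).-2
    (fun t => 0 < t < PI /\ derivable_pt_lim (fun t => p.[cos t]%R) t 0).
Proof.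
move=> p'0; apply: (@at_most_le (size (p^`())%R).-1).
  have p0 : (p != 0)%R by apply: contraNneq p'0 => ->; rewrite deriv0.
  have : (size (p^`())%R <= (size p).-1)%N by rewrite -ltnS prednK ?lt_size_deriv ?size_poly_gt0.
  by move/(leq_sub2r 1); rewrite !subn1.
move: (at_most_roots _ p'0); apply: at_most_cos => t [tI crit]; split; first lra.
exact: root_deriv_critical_horner_cos.
Qed.

Lemma at_most_zeros_horner_cos (p : {poly R}) : (p != 0)%R ->
  at_most (size p).-1 (fun t => 0 <= t <= PI /\ p.[cos t]%R = 0).
Proof. by move=> /at_most_roots; apply: at_most_cos => t [tI /eqP]. Qed.

Definition f_poly (m n p q : R) : {poly R} :=
  Poly [:: gamma_of m q; beta_of m p + 5; alpha_of m n; -20; 0; 16].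

Lemma f_of_horner m n p q t : f_of m n p q t = (f_poly m n p q).[cos t]%R.
Proof. rewrite /f_of cos_5a /f_poly horner_Poly /= -!RplusE -!RmultE -R0E; ring. Qed.

Lemma size_f_poly m n p q : size (f_poly m n p q) = 6%N.
Proof. by rewrite /f_poly (@PolyK _ 1) //=; apply/eqP; rewrite -R0E; lra. Qed.

Lemma f_poly_deriv_neq0 m n p q : ((f_poly m n p q)^`() != 0)%R.
Proof.
apply/eqP => /(congr1 (coefp 4)) /=; rewrite coef_deriv coef0 coef_Poly /=.
by move/eqP; rewrite mulrn_eq0 /= => /eqP; rewrite -R0E; lra.
Qed.

Theorem proposition3 (m n p q : R) (hm : m < 0) :
  at_most 4 (fun theta => 0 < theta < PI /\
                          derivable_pt_lim (f_of m n p q) theta 0)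
  /\ at_most 5 (fun theta => 0 <= theta <= PI /\ f_of m n p q theta = 0).
Proof.
have -> : f_of m n p q = fun t => (f_poly m n p q).[cos t]%R.
  by apply: functional_extensionality => t; apply: f_of_horner.
split.
- by have := at_most_critical_horner_cos _ (f_poly_deriv_neq0 m n p q); rewrite size_f_poly.
- have P0 : (f_poly m n p q != 0)%R by rewrite -size_poly_eq0 size_f_poly.
  by have := at_most_zeros_horner_cos _ P0; rewrite size_f_poly.
Qed.
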